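(* Let $\Lambda$ be diagonal with entries in $[0,1]$ and let $W^{(1)},W^{(2)}\ge 0$ entrywise with $W^{(1)}+W^{(2)}$ row-stochastic. Let $\bar A_d:=\begin{pmatrix}0 & I\\ \Lambda W^{(2)} & \Lambda W^{(1)}\end{pmatrix}$ and $\bar A:=\Lambda(W^{(1)}+W^{(2)})$. Then $\rho(\bar A_d)\ge\rho(\bar A)$.
   Context: $\rho$ denotes spectral radius. $\rho(\bar A_d)$ governs the convergence rate of the FJ-MM system $x(t+1)=\Lambda(W^{(1)}x(t)+W^{(2)}x(t-1))+(I-\Lambda)s$ and $\rho(\bar A)$ that of the comparison FJ system $x(t+1)=\bar A x(t)+(I-\Lambda)s$. *)

(* Real matrices over an arbitrary real closed field R;
   eigenvalues are taken in the algebraic closure R[i] = complex R. *)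
From HB Require Import structures.
From mathcomp Require Import all_boot all_order all_algebra.
From mathcomp Require Import complex.
Set Implicit Arguments. Unset Strict Implicit. Unset Printing Implicit Defensive.
Import Order.TTheory GRing.Theory Num.Theory.
Local Open Scope ring_scope.
Local Open Scope complex_scope.

Definition cmx (R : rcfType) (n : nat) (A : 'M[R]_n) : 'M[R[i]]_n :=
  map_mx (fun x => x%:C) A.

(* the multiset of (complex) eigenvalues of A: the roots, with multiplicity,
   of its characteristic polynomial *)
Definition eigenvalues (R : rcfType) (n : nat) (A : 'M[R]_n) : seq R[i] :=
  proj1_sig (closed_field_poly_normal (char_poly (cmx A))).

(* spectral radius rho(A) = max |lambda| over complex eigenvalues (0 if n = 0) *)
Definition spectral_radius (R : rcfType) (n : nat) (A : 'M[R]_n) : R[i] :=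
  \big[Num.max/0]_(z <- eigenvalues A) `|z|.

Definition FJMM_aug (R : rcfType) (n : nat) (L W1 W2 : 'M[R]_n) : 'M[R]_(n + n) :=
  block_mx 0 1%:M (L *m W2) (L *m W1).

(* For an eigenvalue w of A = Lambda (W1 + W2), a modulus-of-eigenvector
   argument gives a nonnegative y != 0 with |w| y <= A y, and row-stochasticity
   forces mu := |w| <= 1.  Then z = [y; mu y] satisfies mu z <= A_d z, because
   mu^2 y <= mu Lambda W1 y + mu Lambda W2 y <= mu Lambda W1 y + Lambda W2 y.
   By the Collatz-Wielandt bound, such a subinvariant vector of a nonnegative
   matrix yields a real eigenvalue of A_d that is at least mu.  That bound is
   proved without Perron-Frobenius: if the characteristic polynomial of a
   nonnegative B has no root in [t, +oo), then (t - B)^-1 exists and is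
   nonnegative, by induction on the dimension through the Schur complement. *)

From HB Require Import structures.
From mathcomp Require Import all_boot all_order all_algebra.
From mathcomp Require Import complex polyrcf.
From mathcomp Require Import ring lra.
Import Order.TTheory GRing.Theory Num.Theory.
Local Open Scope ring_scope.
Set Implicit Arguments. Unset Strict Implicit.

Lemma char_poly_trmx (S : comNzRingType) n (A : 'M[S]_n) : char_poly A^T = char_poly A.
Proof.
rewrite /char_poly -det_tr; congr (\det _).
by apply/matrixP => i j; rewrite !mxE eq_sym.
Qed.

Lemma horner_char_poly (S : comNzRingType) n (A : 'M[S]_n) s :
  (char_poly A).[s] = \det (s%:M - A).
Proof.
rewrite -horner_evalE -det_map_mx; congr (\det _).
by apply/matrixP => i j; rewrite !mxE /= horner_evalE; case: (i == j); rewrite /= !hornerE.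
Qed.

Lemma scalar_mxB_block (S : pzRingType) N (B : 'M[S]_(1 + N)) t :
  t%:M - B = block_mx (t%:M - ulsubmx B) (- ursubmx B)
                      (- dlsubmx B) (t%:M - drsubmx B).
Proof.
by rewrite -{1}[B]submxK (scalar_mx_block 1 N t) opp_block_mx add_block_mx !add0r.
Qed.

Lemma diag_mulmxE (S : pzRingType) n m (L : 'M[S]_n) (M : 'M[S]_(n, m)) i j :
  is_diag_mx L -> (L *m M) i j = L i i * M i j.
Proof.
move=> /is_diag_mxP L_diag; rewrite mxE (bigD1 i) //= big1 ?addr0 // => k ki.
by rewrite L_diag ?mul0r // eq_sym.
Qed.

Section SchurComplement.
Variables (F : fieldType) (N : nat).
Variables (a : 'M[F]_1) (u : 'M[F]_(1, N)) (v : 'M[F]_(N, 1)) (M Mi : 'M[F]_N).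
Hypothesis M_Mi : M *m Mi = 1%:M.

Lemma det_block_schur :
  \det (block_mx a (- u) (- v) M) = \det M * (a - u *m Mi *m v) 0 0.
Proof.
have Mi_M := mulmx1C M_Mi.
have -> : block_mx a (- u) (- v) M =
    block_mx 1%:M (- (u *m Mi)) 0 1%:M *m block_mx (a - u *m Mi *m v) 0 (- v) M.
  rewrite mulmx_block !mul1mx !mul0mx !add0r !mulNmx !mulmxN opprK subrK.
  by rewrite -mulmxA Mi_M mulmx1.
by rewrite det_mulmx det_ublock det_lblock !det1 !mul1r det_mx11 mulrC.
Qed.

Lemma mulmx_block_schur_inv (sigma : F) :
  a - u *m Mi *m v = sigma%:M -> sigma != 0 ->
  let S := sigma^-1%:M in
  block_mx a (- u) (- v) M *m
    block_mx S (S *m u *m Mi) (Mi *m v *m S) (Mi + Mi *m v *m S *m u *m Mi)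
  = 1%:M.
Proof.
move=> schur sigma_neq0 S.
have sigma_S : (a - u *m Mi *m v) *m S = 1%:M.
  by rewrite schur mul_scalar_mx scale_scalar_mx mulfV.
rewrite [RHS]scalar_mx_block mulmx_block !mulNmx; congr block_mx.
- by rewrite !mulmxA -mulmxBl.
- by rewrite mulmxDr !mulmxA opprD addrA addrAC -!mulmxBl sigma_S mul1mx subrr mul0mx.
- by rewrite !mulmxA M_Mi mul1mx addNr.
- by rewrite mulmxDr !mulmxA M_Mi !mul1mx addrCA addNr addr0.
Qed.

End SchurComplement.

Section NonnegativeMatrices.
Variable R : numDomainType.

Definition nonneg_mx m n (A : 'M[R]_(m, n)) := forall i j, 0 <= A i j.

Lemma nonneg_mx0 m n : nonneg_mx (0 : 'M[R]_(m, n)).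
Proof. by move=> i j; rewrite mxE. Qed.

Lemma nonneg_scalar_mx n (a : R) : 0 <= a -> nonneg_mx (a%:M : 'M[R]_n).
Proof. by move=> a_ge0 i j; rewrite mxE; case: (i == j). Qed.

Lemma nonneg_mxD m n (A B : 'M[R]_(m, n)) :
  nonneg_mx A -> nonneg_mx B -> nonneg_mx (A + B).
Proof. by move=> A_ge0 B_ge0 i j; rewrite mxE addr_ge0. Qed.

Lemma nonneg_mxM m n l (A : 'M[R]_(m, n)) (B : 'M[R]_(n, l)) :
  nonneg_mx A -> nonneg_mx B -> nonneg_mx (A *m B).
Proof. by move=> A_ge0 B_ge0 i j; rewrite mxE sumr_ge0 // => k _; rewrite mulr_ge0. Qed.

Lemma nonneg_block_mx m1 m2 n1 n2 (A : 'M[R]_(m1, n1)) (B : 'M_(m1, n2))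
    (C : 'M_(m2, n1)) (D : 'M_(m2, n2)) :
  nonneg_mx A -> nonneg_mx B -> nonneg_mx C -> nonneg_mx D ->
  nonneg_mx (block_mx A B C D).
Proof.
move=> A_ge0 B_ge0 C_ge0 D_ge0 i j.
case: (split_ordP i) => {}i ->; case: (split_ordP j) => {}j ->.
- by rewrite block_mxEul.
- by rewrite block_mxEur.
- by rewrite block_mxEdl.
- by rewrite block_mxEdr.
Qed.

Lemma nonneg_col_mx m1 m2 n (A : 'M[R]_(m1, n)) (B : 'M[R]_(m2, n)) :
  nonneg_mx A -> nonneg_mx B -> nonneg_mx (col_mx A B).
Proof.
by move=> A_ge0 B_ge0 i j; case: (split_ordP i) => {}i ->;
  rewrite ?col_mxEu ?col_mxEd.
Qed.

Lemma nonneg_submx m1 m2 n1 n2 (B : 'M[R]_(m1 + m2, n1 + n2)) : nonneg_mx B ->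
  [/\ nonneg_mx (ulsubmx B), nonneg_mx (ursubmx B),
      nonneg_mx (dlsubmx B) & nonneg_mx (drsubmx B)].
Proof. by move=> B_ge0; split=> i j; rewrite !mxE. Qed.

End NonnegativeMatrices.

Lemma subinvariant_le1 (R : realDomainType) n (M : 'M[R]_n) (y : 'cV[R]_n) mu :
  nonneg_mx M -> (forall i, \sum_j M i j <= 1) -> nonneg_mx y -> y != 0 ->
  (forall i, mu * y i 0 <= (M *m y) i 0) -> mu <= 1.
Proof.
move=> M_ge0 M_rows y_ge0 /matrix0Pn[i0 [j0 y_i0]] y_sub; rewrite [j0]ord1 in y_i0.
have [k _ k_max] := @arg_maxP _ _ _ i0 xpredT (fun i => y i 0) isT.
have y_k : 0 < y k 0 by rewrite (lt_le_trans _ (k_max i0 isT)) // lt_def y_i0 y_ge0.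
have My_k : (M *m y) k 0 <= y k 0.
  rewrite mxE (le_trans (_ : _ <= \sum_j M k j * y k 0)) //.
    by apply: ler_sum => j _; apply: ler_wpM2l; [exact: M_ge0 | exact: k_max].
  by rewrite -mulr_suml ler_piMl // ltW.
by rewrite -(ler_pM2r y_k) mul1r (le_trans (y_sub k)).
Qed.

Lemma bigmax_norm_real (C : numDomainType) (s : seq C) :
  \big[Num.max/0]_(x <- s) `|x| \is Num.real.
Proof. by apply: bigmax_real => // x _; apply: normr_real. Qed.

Section RealClosedField.
Variable R : rcfType.
Implicit Types (p q : {poly R}) (s t x y : R).

Definition above_roots p t := forall s, t <= s -> ~~ root p s.

Lemma monic_root_ge p x : p \is monic -> p.[x] <= 0 -> exists2 s, x <= s & root p s.
Proof.
move=> /monicP lc1 px_le0.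
have [b0 b0P] : exists b0, forall y, b0 <= y -> 1 <= p.[y].
  by rewrite -lc1; apply: poly_pinfty_gt_lc; rewrite lc1 ltr01.
have x_le_b : x <= Num.max x b0 by rewrite le_max lexx.
have pb_gt0 : 0 < p.[Num.max x b0].
  by rewrite (lt_le_trans ltr01 (b0P _ _)) // le_max lexx orbT.
have sign_change : p.[x] <= 0 <= p.[Num.max x b0] by rewrite px_le0 ltW.
have [s /andP[xs _] rs] := poly_ivt x_le_b sign_change.
by exists s.
Qed.

Lemma monic_above_roots_gt0 p x : p \is monic -> above_roots p x -> 0 < p.[x].
Proof.
move=> p_monic p_above; rewrite ltNge; apply/negP => /(monic_root_ge p_monic)[s xs].
by apply/negP/p_above.
Qed.

Lemma horner_ge0_right q x : (forall y, x < y -> 0 <= q.[y]) -> 0 <= q.[x].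
Proof.
move=> q_ge0; rewrite leNgt; apply/negP => qx_lt0.
have qx_opp_gt0 : 0 < - q.[x] by rewrite oppr_gt0.
have [d d_gt0 dP] := poly_cont x q qx_opp_gt0.
have d2_gt0 : 0 < d / 2%:R by rewrite divr_gt0 ?ltr0n.
have := dP (x + d / 2%:R).
rewrite addrAC subrr add0r gtr0_norm // ltr_pdivrMr ?ltr0n // ltr_pMr // ltr1n.
move=> /(_ isT) /(le_lt_trans (ler_norm _)); rewrite ltrBlDr addNr ltNge.
by rewrite q_ge0 // ltrDl.
Qed.

Lemma largest_root_or_above p t : p != 0 ->
  (exists s, [/\ t <= s, root p s & forall s', s < s' -> ~~ root p s'])
  \/ above_roots p t.
Proof.
move=> p_neq0.
have above (y : R) : {in `]y, cauchy_bound p[, forall z, ~~ root p z} ->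
    forall s, y < s -> ~~ root p s.
  move=> y_max s ys; have [s_lt|cb_le] := ltP s (cauchy_bound p).
    by apply: y_max; rewrite in_itv /= ys.
  by apply: ge_cauchy_bound; rewrite // in_itv /= cb_le.
case: (prev_rootP p (t - 1) (cauchy_bound p)) => [p0|y _ py0 _ y_max|c _ _ none].
- by rewrite p0 eqxx in p_neq0.
- have [ty|yt] := leP t y.
    by left; exists y; split; [|apply/rootP|apply: above].
  by right=> s ts; apply: (above y y_max); apply: lt_le_trans ts.
- by right=> s ts; apply: (above (t - 1) none); rewrite (lt_le_trans _ ts) // gtrBl ltr01.
Qed.

Section ResolventStep.
Variable N : nat.
Hypothesis resolvent_ge0_IH : forall (D : 'M[R]_N) t, nonneg_mx D ->
  above_roots (char_poly D) t -> exists2 X, nonneg_mx X & (t%:M - D) *m X = 1%:M.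
Variable B : 'M[R]_(1 + N).
Hypothesis B_ge0 : nonneg_mx B.
Local Notation a := (ulsubmx B 0 0).
Local Notation u := (ursubmx B).
Local Notation v := (dlsubmx B).
Local Notation D := (drsubmx B).

Lemma horner_char_poly_schur s : above_roots (char_poly D) s ->
  exists2 X, nonneg_mx X & (s%:M - D) *m X = 1%:M /\
    (char_poly B).[s] = (char_poly D).[s] * (s - a - (u *m X *m v) 0 0).
Proof.
move=> D_above; have [_ _ _ D_ge0] := nonneg_submx B_ge0.
have [X X_ge0 DX] := resolvent_ge0_IH D_ge0 D_above.
exists X => //; split=> //.
rewrite !horner_char_poly scalar_mxB_block (det_block_schur _ _ _ DX).
by rewrite !mxE eqxx mulr1n.
Qed.

(* Right of the largest root s1 of char_poly D, the polynomial
   q := ('X - a) * char_poly D - char_poly B equals char_poly D * u (y - D)^-1 v,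
   hence is nonnegative; by continuity q.[s1] = - (char_poly B).[s1] >= 0. *)
Lemma above_roots_drsubmx t :
  above_roots (char_poly B) t -> above_roots (char_poly D) t.
Proof.
move=> B_above s0 ts0; apply/negP => D_s0.
have D_monic := char_poly_monic D.
have [[s1 [ts1 D_s1 s1_max]]|D_above] := largest_root_or_above t (monic_neq0 D_monic);
  last by move/negP: (D_above s0 ts0).
pose q := ('X - a%:P) * char_poly D - char_poly B.
have q_ge0 y : s1 < y -> 0 <= q.[y].
  move=> s1y; have D_above_y : above_roots (char_poly D) y.
    by move=> s ys; apply: s1_max; apply: lt_le_trans ys.
  have [X X_ge0 [_ schur]] := horner_char_poly_schur D_above_y.
  rewrite /q hornerD hornerN hornerM schur !hornerE.
  set P := (char_poly D).[y]; set k := (u *m X *m v) 0 0.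
  have -> : (y - a) * P - P * (y - a - k) = P * k by ring.
  have [_ u_ge0 v_ge0 _] := nonneg_submx B_ge0.
  apply: mulr_ge0; first exact/ltW/monic_above_roots_gt0.
  exact: nonneg_mxM (nonneg_mxM u_ge0 X_ge0) v_ge0 0 0.
have := horner_ge0_right q_ge0.
rewrite /q hornerD hornerN hornerM (rootP D_s1) mulr0 sub0r oppr_ge0.
move=> /(monic_root_ge (char_poly_monic B))[s2 s12 B_s2].
by move/negP: (B_above s2 (le_trans ts1 s12)).
Qed.

Lemma resolvent_ge0_step t : above_roots (char_poly B) t ->
  exists2 X, nonneg_mx X & (t%:M - B) *m X = 1%:M.
Proof.
move=> B_above; have D_above := above_roots_drsubmx B_above.
have [_ u_ge0 v_ge0 _] := nonneg_submx B_ge0.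
have [X X_ge0 [DX schur]] := horner_char_poly_schur D_above.
set sigma := t - a - _ in schur.
have sigma_gt0 : 0 < sigma.
  move: (monic_above_roots_gt0 (char_poly_monic B) B_above).
  by rewrite schur pmulr_rgt0 // monic_above_roots_gt0 // char_poly_monic.
have sigmaE : (t%:M - ulsubmx B) - u *m X *m v = sigma%:M.
  by apply/matrixP => i j; rewrite !ord1 /sigma !mxE eqxx !mulr1n.
have S_ge0 : nonneg_mx (sigma^-1%:M : 'M_1).
  by apply: nonneg_scalar_mx; rewrite invr_ge0 ltW.
eexists; last first.
  by rewrite scalar_mxB_block; exact (mulmx_block_schur_inv DX sigmaE (lt0r_neq0 sigma_gt0)).
apply: nonneg_block_mx => //; last apply: nonneg_mxD => //.
all: by repeat apply: nonneg_mxM.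
Qed.

End ResolventStep.

Lemma resolvent_ge0 N (B : 'M[R]_N) t : nonneg_mx B ->
  above_roots (char_poly B) t -> exists2 X, nonneg_mx X & (t%:M - B) *m X = 1%:M.
Proof.
elim: N B t => [|N IH] B t.
  by move=> _ _; exists 0; [exact: nonneg_mx0 | apply/matrixP => -[]].
by move: B; rewrite -[N.+1]/(1 + N)%N => B B_ge0; exact: resolvent_ge0_step.
Qed.

(* If no root is >= mu, then y = (mu - B)^-1 (mu - B) y is a nonnegative
   combination of the nonpositive entries of (mu - B) y, so y <= 0. *)
Lemma subinvariant_root_ge N (B : 'M[R]_N) (y : 'cV[R]_N) mu :
  nonneg_mx B -> nonneg_mx y -> y != 0 ->
  (forall i, mu * y i 0 <= (B *m y) i 0) ->
  exists2 s, mu <= s & root (char_poly B) s.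
Proof.
move=> B_ge0 y_ge0 y_neq0 y_sub.
have [[s [mu_s B_s _]]|B_above] :=
  largest_root_or_above mu (monic_neq0 (char_poly_monic B)); first by exists s.
have [X X_ge0 BX] := resolvent_ge0 B_ge0 B_above.
case/eqP: y_neq0; apply/matrixP => i j; rewrite [j]ord1 mxE.
apply/eqP; rewrite eq_le y_ge0 andbT.
have -> : y = X *m ((mu%:M - B) *m y) by rewrite mulmxA (mulmx1C BX) mul1mx.
rewrite mxE; apply: sumr_le0 => k _; apply: mulr_ge0_le0 => //.
by move: (y_sub k); rewrite mulmxBl mul_scalar_mx !mxE subr_le0.
Qed.

Local Open Scope complex_scope.

Lemma ge0_complexE (x : R[i]) : 0 <= x -> x = (complex.Re x)%:C.
Proof. by case: x => a b; rewrite lecE => /andP[/eqP/= -> _]. Qed.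

Lemma mem_eigenvalues n (A : 'M[R]_n) z :
  (z \in eigenvalues A) = root (char_poly (cmx A)) z.
Proof.
rewrite /eigenvalues; case: closed_field_poly_normal => r /= ->.
by rewrite (monicP (char_poly_monic _)) scale1r root_prod_XsubC.
Qed.

Lemma real_root_eigenvalue n (A : 'M[R]_n) s :
  root (char_poly A) s -> s%:C \in eigenvalues A.
Proof.
rewrite mem_eigenvalues /cmx -map_char_poly => /rootP As.
by apply/rootP; rewrite horner_map As.
Qed.

(* The entrywise modulus of an eigenvector of A^T for w. *)
Lemma eigenvalue_subinvariant n (A : 'M[R]_n) w : nonneg_mx A ->
  w \in eigenvalues A -> exists y : 'cV[R]_n,
    [/\ nonneg_mx y, y != 0 & forall i, complex.Re `|w| * y i 0 <= (A *m y) i 0].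
Proof.
move=> A_ge0; rewrite mem_eigenvalues -char_poly_trmx -eigenvalue_root_char.
case/eigenvalueP => v vA v_neq0.
have modE (z : R[i]) : `|z| = (complex.Re `|z|)%:C by apply/ge0_complexE.
exists (\col_i complex.Re `|v 0 i|); split.
- by move=> i j; rewrite mxE -ler0c -modE.
- apply: contra v_neq0 => /eqP y0; apply/eqP/rowP => i.
  have := congr1 (fun M : 'cV_n => M i 0) y0; rewrite !mxE => v_i0.
  by apply/eqP; rewrite -normr_eq0 modE v_i0.
- move=> i; have := congr1 (fun M : 'rV_n => M 0 i) vA; rewrite !mxE => vA_i.
  rewrite -lecR rmorphM rmorph_sum /= -!modE -normrM -vA_i.
  apply: le_trans (ler_norm_sum _ _ _) _; apply: ler_sum => j _.
  rewrite !mxE normrM rmorphM /= -modE mulrC ger0_norm // ler0c.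
  exact: A_ge0.
Qed.

Lemma spectral_radius_ge0 n (A : 'M[R]_n) : 0 <= spectral_radius A.
Proof.
rewrite /spectral_radius; elim: (eigenvalues A) => [|x s IH]; first by rewrite big_nil.
rewrite big_cons comparable_le_max ?IH ?orbT //.
exact: real_comparable (normr_real _) (bigmax_norm_real s).
Qed.

Lemma le_spectral_radius n (A : 'M[R]_n) z :
  z \in eigenvalues A -> `|z| <= spectral_radius A.
Proof.
rewrite /spectral_radius; elim: (eigenvalues A) => [|x s IH] //.
rewrite in_cons big_cons comparable_le_max.
  by case/predU1P => [->|/IH ->]; rewrite ?lexx ?orbT.
exact: real_comparable (normr_real _) (bigmax_norm_real s).
Qed.

Local Close Scope complex_scope.

Lemma FJMM_aug_subinvariant n (L W1 W2 : 'M[R]_n) (y : 'cV[R]_n) mu :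
  nonneg_mx (L *m W1) -> nonneg_mx (L *m W2) -> nonneg_mx y -> 0 <= mu <= 1 ->
  (forall i, mu * y i 0 <= (L *m (W1 + W2) *m y) i 0) ->
  forall i, mu * col_mx y (mu *: y) i 0 <= (FJMM_aug L W1 W2 *m col_mx y (mu *: y)) i 0.
Proof.
move=> LW1_ge0 LW2_ge0 y_ge0 /andP[mu_ge0 mu_le1] y_sub i.
rewrite /FJMM_aug mul_block_col; case: (split_ordP i) => {}i ->.
  by rewrite !col_mxEu mul0mx add0r mul1mx mxE.
rewrite !col_mxEd -scalemxAr !mxE.
have := y_sub i; rewrite mulmxDr mulmxDl !mxE.
have := nonneg_mxM LW1_ge0 y_ge0 i 0; have := nonneg_mxM LW2_ge0 y_ge0 i 0.
rewrite !mxE; nra.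
Qed.

End RealClosedField.

Theorem proposition2 (R : rcfType) (n : nat) (L W1 W2 : 'M[R]_n) :
  is_diag_mx L ->
  (forall i, 0 <= L i i <= 1) ->
  (forall i j, 0 <= W1 i j) ->
  (forall i j, 0 <= W2 i j) ->
  (forall i, \sum_j (W1 + W2) i j = 1) ->
  spectral_radius (L *m (W1 + W2)) <= spectral_radius (FJMM_aug L W1 W2).
Proof.
move=> L_diag L_01 W1_ge0 W2_ge0 W_rows.
have L_ge0 : nonneg_mx L.
  move=> i j; have [->|ij] := eqVneq i j; first by case/andP: (L_01 j).
  by rewrite (is_diag_mxP L_diag).
have LW1_ge0 := nonneg_mxM L_ge0 W1_ge0; have LW2_ge0 := nonneg_mxM L_ge0 W2_ge0.
have A_ge0 : nonneg_mx (L *m (W1 + W2)) by rewrite mulmxDr; exact: nonneg_mxD.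
have Ad_ge0 : nonneg_mx (FJMM_aug L W1 W2).
  by apply: nonneg_block_mx => //; [exact: nonneg_mx0 | exact: nonneg_scalar_mx ler01].
have A_rows i : \sum_j (L *m (W1 + W2)) i j <= 1.
  under eq_bigr do rewrite diag_mulmxE //.
  by rewrite -mulr_sumr W_rows mulr1; case/andP: (L_01 i).
rewrite [X in X <= _]/spectral_radius big_seq; apply: bigmax_le => [|w w_eig].
  exact: spectral_radius_ge0.
have [y [y_ge0 y_neq0 y_sub]] := eigenvalue_subinvariant A_ge0 w_eig.
set mu := complex.Re `|w| in y_sub.
have mu_ge0 : 0 <= mu by rewrite -ler0c -ge0_complexE.
have mu_le1 := subinvariant_le1 A_ge0 A_rows y_ge0 y_neq0 y_sub.
have z_ge0 : nonneg_mx (col_mx y (mu *: y)).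
  by apply: nonneg_col_mx => // i j; rewrite mxE mulr_ge0.
have z_neq0 : col_mx y (mu *: y) != 0 by rewrite col_mx_eq0 negb_and y_neq0.
have [s mu_s Ad_s] := subinvariant_root_ge Ad_ge0 z_ge0 z_neq0
  (FJMM_aug_subinvariant LW1_ge0 LW2_ge0 y_ge0 (introT andP (conj mu_ge0 mu_le1)) y_sub).
apply: le_trans (le_spectral_radius (real_root_eigenvalue Ad_s)).
have s_ge0 : 0 <= s := le_trans mu_ge0 mu_s.
by rewrite (ge0_complexE (normr_ge0 w)) [`|s%:C%C|]ger0_norm ?ler0c // lecR.
Qed.
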